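(* Let $n\ge2$ and $\mathsf u\in\mathcal S_n$. Arrange the $n(n-1)$ positions of $\bm\lambda_n$ in an array with $n$ rows and $n-1$ columns, position $j$ lying in row $\lceil j/(n-1)\rceil$ and column $((j-1)\bmod (n-1))+1$. Then each of the $n-1$ columns contains exactly one negative skip of $\mathsf u$, and each row except the last (i.e. each of rows $1,\dots,n-1$) contains exactly one negative skip of $\mathsf u$.
   Context: $\widetilde S_n$ is the group, under composition $(vw)(k)=v(w(k))$, of bijections $w:\mathbb Z\to\mathbb Z$ with $w(i+n)=w(i)+n$ and $\sum_{i=1}^n w(i)=\binom{n+1}2$. For $i\not\equiv j\pmod n$, $(\!(i,j)\!)$ swaps $i+kn$ and $j+kn$ for all $k$; $(\!(i,j)\!)=(\!(j,i)\!)=(\!(i+kn,j+kn)\!)$; $s_i=(\!(i,i+1)\!)$, $i\in\{0,\dots,n-1\}$. ''$i\bmod n$'' is the representative of $i$ modulo $n$ in $\{1,\dots,n\}$. $\bm\lambda_n$ is the word $[s_0,\dots,s_{n-1}]$ repeated $n-1$ times with $j$-th letter $\sigma_j=s_{(j-1)\bmod n}$ (index in $\{0,\dots,n-1\}$). A subword is $\mathsf u=[u_1,\dots,u_{n(n-1)}]$ with $u_j\in\{\sigma_j,e\}$; $j$ is a skip if $u_j=e$. $u_{(j)}=u_1\cdots u_j$, $u_{(0)}=e$. $\mathcal S_n$ is the set of subwords with exactly $2n-2$ skips and product $e$. For a skip $j$, its reflection is $t_j=u_{(j-1)}\sigma_ju_{(j-1)}^{-1}$. The skip $j$ is negative if,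 writing $t_j=(\!(a,b)\!)$ with integers $a<b$, one has $1\le (b\bmod n)<(a\bmod n)\le n$; otherwise it is positive. *)

(* Affine permutations of Z are modelled as functions int -> int. *)
From mathcomp Require Import all_boot all_order all_algebra.
Set Implicit Arguments. Unset Strict Implicit. Unset Printing Implicit Defensive.
Import Order.TTheory GRing.Theory Num.Theory intZmod.
Local Open Scope ring_scope.

(* ((a,b)) : swaps a+kn and b+kn for all k (meaningful when a <> b mod n). *)
Definition atrans (n : nat) (a b : int) : int -> int := fun x =>
  if ((x - a) %% n)%Z == 0 then x + (b - a)
  else if ((x - b) %% n)%Z == 0 then x + (a - b) else x.

Definition gen (n : nat) (i : int) : int -> int := atrans n i (i + 1).

Definition sigma (n j : nat) : int -> int := gen n ((j.-1 %% n)%N)%:Z.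

(* A subword of lambda_n is a list u of n(n-1) booleans; the j-th entry
   (j = 1..n(n-1), stored at list index j-1) is true iff j is a skip. *)
Definition is_skip (n : nat) (u : seq bool) (j : nat) : bool :=
  [&& (1 <= j)%N, (j <= n * n.-1)%N & nth false u j.-1].

Definition letter (n : nat) (u : seq bool) (j : nat) : int -> int :=
  if nth false u j.-1 then id else sigma n j.

(* u_(j) = u_1 ... u_j, with (vw)(k) = v(w(k)) *)
Fixpoint uprefix (n : nat) (u : seq bool) (j : nat) : int -> int :=
  match j with
  | 0 => id
  | j'.+1 => fun k => uprefix n u j' (letter n u j'.+1 k)
  end.

(* u_(j)^{-1} = u_j ... u_1 (every letter is an involution) *)
Fixpoint uprefix_inv (n : nat) (u : seq bool) (j : nat) : int -> int :=
  match j with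
  | 0 => id
  | j'.+1 => fun k => letter n u j'.+1 (uprefix_inv n u j' k)
  end.

Definition refl_of (n : nat) (u : seq bool) (j : nat) : int -> int :=
  fun k => uprefix n u j.-1 (sigma n j (uprefix_inv n u j.-1 k)).

Definition in_Sn (n : nat) (u : seq bool) : Prop :=
  [/\ size u = (n * n.-1)%N, count id u = (2 * n - 2)%N
    & forall k : int, uprefix n u (n * n.-1) k = k].

Definition modrep (n : nat) (x : int) : int :=
  let r := (x %% n)%Z in if r == 0 then n%:Z else r.

Definition negative_skip (n : nat) (u : seq bool) (j : nat) : Prop :=
  is_skip n u j /\
  exists a b : int, a < b /\ (forall k, refl_of n u j k = atrans n a b k) /\
    (1 <= modrep n b) /\ (modrep n b < modrep n a) /\ (modrep n a <= n%:Z).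

(* position j lies in row ceil(j/(n-1)) and column ((j-1) mod (n-1)) + 1 *)
Definition row_of (n j : nat) : nat := ((j + n.-1.-1) %/ n.-1)%N.
Definition col_of (n j : nat) : nat := ((j.-1 %% n.-1).+1)%N.

From mathcomp Require Import all_boot all_order all_algebra.
From mathcomp Require Import zify ring.
Set Implicit Arguments. Unset Strict Implicit. Unset Printing Implicit Defensive.
Import Order.TTheory GRing.Theory Num.Theory.
Local Open Scope ring_scope.

(* Follow u_(t) on the window of the n consecutive positions t, ..., t+n-1.  The letter
   sigma_(t+1) exchanges the positions t and t+1 modulo n, so the window slides by one
   position per letter: if the letter is kept, the value at t moves to t+1 and the value
   at t+1 moves to t+n, raised by n; if it is skipped, the value at t+1 stays and the
   value at t reappears at t+n, raised by n.  Label the n values of the window.  Measured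
   against the row offset, a label advances one column each time it is carried and loses
   n each time it is carried over a row end; since u_(n(n-1)) = e, every label ends in
   its initial column, exactly one lap further.  A column without skips would keep its
   label, which then never completes its lap, and a column with a single skip would end
   with a foreign label; as there are 2n-2 skips, every column holds exactly two.  Up to a
   common shift by a multiple of n the reflections at these two skips are ((x, c)) and
   ((c-n, x)) with c-n < x < c, and a skip ((a, b)) is negative exactly when a <= 0 < b,
   so exactly one of them is negative.  Along a row the normalised value at the current
   position only increases, a skip being negative exactly when it lifts it from <= 0 to
   > 0; every row starts at a value <= 0 and ends above 0, hence has one negative skip. *)

Lemma modzDMr (x q d : int) : ((x + q * d) %% d)%Z = (x %% d)%Z.
Proof. by rewrite addrC modzMDl. Qed.

Lemma modz_eq0P (d x : int) : reflect (exists q : int, x = q * d) ((x %% d)%Z == 0).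
Proof.
apply: (iffP eqP) => [/dvdz_mod0P/dvdzP//|[q ->]]; exact: modzMl.
Qed.

Lemma modz_subr_eq0P (d x y : int) :
  reflect (exists q : int, x = y + q * d) (((x - y) %% d)%Z == 0).
Proof.
apply: (iffP (modz_eq0P _ _)) => -[q hq]; exists q; last by rewrite hq; ring.
by rewrite -hq; ring.
Qed.

Lemma modz_small_neq0 (n : nat) (x : int) : 0 < x < n -> ((x %% n)%Z == 0) = false.
Proof. by move=> hx; rewrite modz_small ?gt_eqF //; lia. Qed.

Lemma eq_subz_muln (n p k l : nat) : (p < n)%N -> (k < n)%N ->
  p%:Z - (n * l)%N%:Z = k%:Z - n%:Z -> p = k /\ l = 1%N.
Proof. by case: l => [|[|l]] hp hk e; [lia|split; lia|nia]. Qed.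

Lemma sub_muln_bounds (n p c d o : nat) :
  (1 <= c <= n.-1)%N -> (p <= n.-1)%N -> (o < n.-1)%N -> ((0 < p)%N -> (0 < o)%N) ->
  (n.-1 * d + c.-1 = p.-1 + o)%N ->
  c%:Z - n%:Z < p%:Z - (n * d)%N%:Z < c%:Z.
Proof. by case: d => [|[|d]] hc hp ho hpos e; apply/andP; split; nia. Qed.

Lemma sum_count_fibers (T : eqType) (P : pred T) (f : T -> nat) (a b : nat) (s : seq T) :
  {in s, forall x, a <= f x < b}%N ->
  (\sum_(a <= c < b) count (fun x => P x && (f x == c)) s = count P s)%N.
Proof.
elim: s => [|x s IH] hs /=; first by rewrite big1.
rewrite big_split /= IH => [|y ys]; last by apply: hs; rewrite inE ys orbT.
congr (_ + _)%N; case: (P x) => /=; last by rewrite big1.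
rewrite (bigD1_seq (f x)) ?mem_index_iota ?iota_uniq ?hs ?mem_head //= eqxx.
by rewrite big1 // => c /negbTE; rewrite eq_sym => ->.
Qed.

Lemma sum_nat_eq_lb (k a b : nat) (F : nat -> nat) :
  (forall c, a <= c < b -> k <= F c)%N -> (\sum_(a <= c < b) F c = k * (b - a))%N ->
  forall c, (a <= c < b)%N -> F c = k.
Proof.
move=> hlb hsum c hc.
have : (\sum_(a <= i < b) (F i - k) == 0)%N.
  rewrite -(eqn_add2r (\sum_(a <= i < b) k)) -big_split /= add0n.
  rewrite sum_nat_const_nat mulnC -hsum; apply/eqP/eq_big_nat => i hi.
  by rewrite subnK ?hlb.
rewrite sum_nat_seq_eq0 => /allP /(_ c); rewrite mem_index_iota => /(_ hc) /=.
by have := hlb c hc; lia.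
Qed.

Lemma modrep_small (n : nat) (v q : int) : (1 < n)%N -> - n%:Z < v < n%:Z ->
  modrep n (v + q * n) = if 0 < v then v else v + n.
Proof.
move=> hn hv; rewrite /modrep modzDMr.
have [v_gt0|v_le0] := ltrP 0 v.
  by rewrite modz_small ?gt_eqF //; lia.
have [->|v_neq0] := eqVneq v 0; first by rewrite mod0z eqxx add0r.
rewrite (_ : (v %% n)%Z = v + n); last by rewrite -(modzDMr _ 1) mul1r modz_small; lia.
by rewrite gt_eqF //; lia.
Qed.

Lemma count_zero_crossings (B A : nat -> int) (s L : nat) :
  (forall k, (k <= L)%N -> B (s + k)%N <= A (s + k)%N) ->
  (forall k, (k < L)%N -> B (s + k).+1 = A (s + k)%N) ->
  count (fun j => (B j <= 0) && (0 < A j)) (iota s L.+1)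
    = ((B s <= 0) && (0 < A (s + L)%N) : nat).
Proof.
move=> hBA hstep.
suff [] : count (fun j => (B j <= 0) && (0 < A j)) (iota s L.+1)
    = ((B s <= 0) && (0 < A (s + L)%N) : nat) /\ B s <= A (s + L)%N by [].
elim: L s hBA hstep => [|L IH] s hBA hstep.
  by split; [rewrite /= !addn0|have := hBA 0%N isT; rewrite addn0].
have [IH1 IH2] := IH s.+1 (fun k hk => ltac:(rewrite addSnnS; apply: hBA; lia))
                        (fun k hk => ltac:(rewrite addSnnS; apply: hstep; lia)).
have e : B s.+1 = A s by have := hstep 0%N isT; rewrite addn0.
have hb := hBA 0%N isT; rewrite addn0 in hb.
change (count ?P (iota s L.+2)) with (P s + count P (iota s.+1 L.+1))%N.
rewrite IH1 e addSnnS; rewrite e addSnnS in IH2.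
split; last by lia.
by case: (lerP (B s) 0) => hB; case: (ltrP 0 (A s)) => hA /=; lia.
Qed.

Lemma count_eq1_ex_unique (T : eqType) (P : pred T) (s : seq T) : count P s = 1%N ->
  exists x, [/\ x \in s, P x & forall y, y \in s -> P y -> y = x].
Proof.
rewrite -size_filter; case E: (filter P s) => [|x [|y l]] //= _.
have : x \in filter P s by rewrite E mem_head.
rewrite mem_filter => /andP[Px xs]; exists x; split => // y ys Py.
have : y \in filter P s by rewrite mem_filter Py ys.
by rewrite E inE => /eqP.
Qed.

Section AffineTranspositions.
Variable n : nat.

Lemma atrans_periodic (a b y q : int) :
  atrans n a b (y + q * n) = atrans n a b y + q * n.
Proof.
rewrite /atrans (_ : y + q * n - a = y - a + q * n) 1?(_ : y + q * n - b = y - b + q * n);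
  try ring.
by rewrite !modzDMr; case: ifP => _; [|case: ifP => _]; ring.
Qed.

Lemma atrans_shift (a b q : int) :
  atrans n (a + q * n) (b + q * n) =1 atrans n a b.
Proof.
move=> y; rewrite /atrans (_ : y - (a + q * n) = y - a + (- q) * n)
  1?(_ : y - (b + q * n) = y - b + (- q) * n); try ring.
by rewrite !modzDMr; case: ifP => _; [|case: ifP => _]; ring.
Qed.

Lemma atrans_fst (a b q : int) : atrans n a b (a + q * n) = b + q * n.
Proof.
by rewrite /atrans (_ : a + q * n - a = 0 + q * n) ?modzDMr ?mod0z ?eqxx; ring.
Qed.

Lemma atrans_snd (a b q : int) :
  ((b - a) %% n)%Z != 0 -> atrans n a b (b + q * n) = a + q * n.
Proof.
move=> /negbTE hab; rewrite /atrans (_ : b + q * n - a = b - a + q * n); last by ring.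
by rewrite modzDMr hab (_ : b + q * n - b = 0 + q * n) ?modzDMr ?mod0z ?eqxx; ring.
Qed.

Lemma atrans_id (a b y : int) :
  ((y - a) %% n)%Z != 0 -> ((y - b) %% n)%Z != 0 -> atrans n a b y = y.
Proof. by rewrite /atrans => /negbTE -> /negbTE ->. Qed.

Lemma atransK (a b : int) : ((b - a) %% n)%Z != 0 -> involutive (atrans n a b).
Proof.
move=> hab y.
have [/modz_subr_eq0P[q ->]|ya] := boolP (((y - a) %% n)%Z == 0).
  by rewrite atrans_fst atrans_snd.
have [/modz_subr_eq0P[q ->]|yb] := boolP (((y - b) %% n)%Z == 0).
  by rewrite atrans_snd // atrans_fst.
by rewrite !atrans_id.
Qed.

Lemma atrans_pair (a b a' b' : int) : a < b -> a' < b' -> atrans n a b a' = b' ->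
  exists q : int, a' = a + q * n /\ b' = b + q * n.
Proof.
move=> ab ab'.
have [/modz_subr_eq0P[q ->]|a'a] := boolP (((a' - a) %% n)%Z == 0).
  by rewrite atrans_fst => <-; exists q.
have [/modz_subr_eq0P[q e]|a'b] := boolP (((a' - b) %% n)%Z == 0).
  by rewrite /atrans (negbTE a'a) e (_ : b + q * n - b = 0 + q * n) ?modzDMr ?mod0z //=; lia.
by rewrite atrans_id //; lia.
Qed.

Variable f : int -> int.
Hypothesis f_inj : injective f.
Hypothesis f_periodic : forall y q : int, f (y + q * n) = f y + q * n.

Lemma periodic_congr (x y : int) :
  (((f x - f y) %% n)%Z == 0) = (((x - y) %% n)%Z == 0).
Proof.
apply/modz_eq0P/modz_eq0P => -[q hq]; exists q; last first.
  by rewrite (_ : x = y + q * n) ?f_periodic; [ring|rewrite -hq; ring].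
have /f_inj -> : f x = f (y + q * n) by rewrite f_periodic -hq; ring.
ring.
Qed.

Lemma atrans_conj (a b y : int) :
  f (atrans n a b y) = atrans n (f a) (f b) (f y).
Proof.
have [/modz_subr_eq0P[q ->]|ya] := boolP (((y - a) %% n)%Z == 0).
  by rewrite atrans_fst !f_periodic atrans_fst.
have [/modz_subr_eq0P[q yE]|yb] := boolP (((y - b) %% n)%Z == 0).
  rewrite {}yE in ya *.
  have ba : ((b - a) %% n)%Z != 0 by move: ya; rewrite addrAC modzDMr.
  by rewrite atrans_snd // !f_periodic atrans_snd // periodic_congr.
by rewrite !atrans_id ?periodic_congr.
Qed.

End AffineTranspositions.

Lemma sigmaE (n t : nat) : sigma n t.+1 =1 atrans n t%:Z t.+1%:Z.
Proof.
move=> y; rewrite /sigma /gen /= -(atrans_shift _ _ _ (t %/ n)%N).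
have ht : t%:Z = (t %% n)%N%:Z + (t %/ n)%N%:Z * n.
  by rewrite {1}(divn_eq t n) PoszD PoszM addrC.
by congr atrans; rewrite -?[t.+1]addn1 ?PoszD ht; ring.
Qed.

Section Prefixes.
Variables (n : nat) (u : seq bool).
Hypothesis n_gt1 : (1 < n)%N.

Lemma letter_periodic j (y q : int) :
  letter n u j (y + q * n) = letter n u j y + q * n.
Proof. by rewrite /letter; case: ifP => // _; apply: atrans_periodic. Qed.

Lemma uprefix_periodic t (y q : int) :
  uprefix n u t (y + q * n) = uprefix n u t y + q * n.
Proof. by elim: t y => [|t IH] y //=; rewrite letter_periodic IH. Qed.

Lemma genK (i : int) : involutive (gen n i).
Proof. by apply: atransK; rewrite addrAC subrr add0r modz_small_neq0 //; lia. Qed.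

Lemma letterK j : involutive (letter n u j).
Proof. by rewrite /letter; case: ifP => // _; apply: genK. Qed.

Lemma uprefix_invK t : cancel (uprefix_inv n u t) (uprefix n u t).
Proof. by elim: t => [|t IH] k //=; rewrite letterK IH. Qed.

Lemma uprefixK t : cancel (uprefix n u t) (uprefix_inv n u t).
Proof. by elim: t => [|t IH] y //=; rewrite IH letterK. Qed.

Lemma refl_ofE t :
  refl_of n u t.+1 =1 atrans n (uprefix n u t t%:Z) (uprefix n u t t.+1%:Z).
Proof.
move=> k; rewrite /refl_of /= sigmaE.
by rewrite (atrans_conj (can_inj (uprefixK t)) (uprefix_periodic t)) uprefix_invK.
Qed.

Definition skipped (u : seq bool) (j : nat) : bool := nth false u j.-1.

Lemma uprefix_skip t : skipped u t.+1 -> uprefix n u t.+1 =1 uprefix n u t.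
Proof. by rewrite /skipped /= => h y; rewrite /letter h. Qed.

Lemma uprefix_keep t : ~~ skipped u t.+1 ->
  uprefix n u t.+1 =1 uprefix n u t \o atrans n t%:Z t.+1%:Z.
Proof. by rewrite /skipped /= => /negbTE h y; rewrite /letter h sigmaE. Qed.

Lemma uprefix_keep_next t : ~~ skipped u t.+1 ->
  uprefix n u t.+1 t.+1%:Z = uprefix n u t t%:Z.
Proof.
move=> /uprefix_keep ->; congr uprefix.
have := @atrans_snd n t t.+1 0; rewrite !mul0r !addr0; apply.
by rewrite (_ : _ - _ = 1) ?modz_small_neq0 //; lia.
Qed.

Lemma uprefix_keep_last t : ~~ skipped u t.+1 ->
  uprefix n u t.+1 (t + n)%N%:Z = uprefix n u t t.+1%:Z + n.
Proof.
move=> /uprefix_keep -> /=; rewrite PoszD.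
have := @atrans_fst n t t.+1 1; rewrite mul1r => ->.
by rewrite -{1}(mul1r n%:Z) uprefix_periodic mul1r.
Qed.

Lemma uprefix_keep_mid t (y : nat) : ~~ skipped u t.+1 -> (t.+1 < y < t + n)%N ->
  uprefix n u t.+1 y%:Z = uprefix n u t y%:Z.
Proof.
move=> /uprefix_keep -> hy /=; rewrite atrans_id // modz_small_neq0 //; lia.
Qed.

End Prefixes.

(* After t letters the window holds the values of u_(t) at t, ..., t+n-1 under labels
   0, ..., n-1: [carried] labels position t, [slot c] the position of column c, and label p
   has value p - n * laps p, to which the row offset [base] of the position is added. *)
Record window := Window { carried : nat; slot : nat -> nat; laps : nat -> nat }.

Definition row_end (n t : nat) : bool := (n.-1 %| t)%N.

Definition window_step (n : nat) (u : seq bool) (t : nat) (s : window) : window :=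
  let c := col_of n t.+1 in
  let p := if skipped u t.+1 then slot s c else carried s in
  Window p
    (if skipped u t.+1 then fun k => if k == c then carried s else slot s k
     else slot s)
    (fun q => laps s q + (row_end n t.+1 && (q == p)))%N.

Fixpoint window_at (n : nat) (u : seq bool) (t : nat) : window :=
  if t is t'.+1 then window_step n u t' (window_at n u t')
  else Window 0 id (fun=> 0%N).

Definition window_wf (n : nat) (s : window) : Prop :=
  [/\ (carried s < n)%N,
      forall k, (1 <= k <= n.-1)%N -> (slot s k < n)%N /\ slot s k != carried s &
      {in [pred k | 1 <= k <= n.-1]%N &, injective (slot s)}].

Definition label_value (n : nat) (s : window) (p : nat) : int :=
  p%:Z - (n * laps s p)%N%:Z.

Definition base (n y : nat) : int := (n * (y.-1 %/ n.-1))%N%:Z.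

Definition tracks (n : nat) (u : seq bool) (t : nat) (s : window) : Prop :=
  uprefix n u t t%:Z = label_value n s (carried s) + base n t.+1 /\
  forall y : nat, (t < y <= t + n.-1)%N ->
    uprefix n u t y%:Z = label_value n s (slot s (col_of n y)) + base n y.

Definition carry_count (n : nat) (u : seq bool) (p t : nat) : nat :=
  count (fun t' => carried (window_at n u t') == p) (iota 1 t).

Definition col_skips (n : nat) (u : seq bool) (c : nat) : seq nat :=
  [seq j <- iota 1 (n * n.-1) | skipped u j && (col_of n j == c)].

Lemma mem_col_skips n u c j :
  (j \in col_skips n u c) = [&& (0 < j <= n * n.-1)%N, skipped u j & col_of n j == c].
Proof. by rewrite mem_filter mem_iota andbC; congr (_ && _); apply/idP/idP; lia. Qed.

Lemma count_skipped (u : seq bool) : count (skipped u) (iota 1 (size u)) = count id u.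
Proof.
rewrite -[iota 1 _]/(iota (1 + 0) _) iotaDl count_map.
rewrite -[in RHS](mkseq_nth false u) /mkseq count_map.
by apply: eq_count => i; rewrite /skipped /= ?add1n.
Qed.

Section Grid.
Variable n : nat.
Hypothesis n_gt1 : (1 < n)%N.

Lemma col_of_range y : (1 <= col_of n y <= n.-1)%N.
Proof. by rewrite /col_of ltn_mod; lia. Qed.

Lemma col_of_neq t y : (t.+1 < y <= t + n.-1)%N -> col_of n y != col_of n t.+1.
Proof.
move=> hy; rewrite /col_of /= eqSS; apply/negP => /eqP h.
have : (t + (y.-1 - t) == t + 0 %[mod n.-1])%N by rewrite addn0 -h subnKC //; lia.
by rewrite eqn_modDl mod0n modn_small; lia.
Qed.

Lemma col_of_addn t : col_of n (t + n) = col_of n t.+1.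
Proof. by rewrite /col_of (_ : (t + n).-1 = t + n.-1)%N ?modnDr //; lia. Qed.

Lemma base_succ t : base n t.+2 = base n t.+1 + (n * row_end n t.+1)%N%:Z.
Proof. by rewrite /base /= divnS ?mulnDr ?PoszD 1?addrC //; lia. Qed.

Lemma row_end_modn t : (n.-1 * row_end n t.+1 + t.+1 %% n.-1 = t %% n.-1 + 1)%N.
Proof.
have hm : (0 < n.-1)%N by lia.
have := divn_eq t n.-1; have := divn_eq t.+1 n.-1; have := divnS t hm.
by rewrite /row_end; case: (n.-1 %| t.+1)%N => /=; lia.
Qed.

Lemma col_of_last_row k : (1 <= k <= n.-1)%N -> col_of n (n * n.-1 + k) = k.
Proof.
move=> hk; rewrite /col_of (_ : (n * n.-1 + k).-1 = n * n.-1 + k.-1)%N; last by lia.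
by rewrite modnMDl modn_small; lia.
Qed.

Lemma base_last_row k : (1 <= k <= n.-1)%N -> base n (n * n.-1 + k) = (n * n)%N.
Proof.
move=> hk; rewrite /base (_ : (n * n.-1 + k).-1 = n * n.-1 + k.-1)%N; last by lia.
by rewrite divnMDl ?divn_small; lia.
Qed.

Lemma base_addn t : base n (t + n) = base n t.+1 + n.
Proof.
have hm : (0 < n.-1)%N by lia.
rewrite /base /= (_ : (t + n).-1 = t + n.-1)%N; last by lia.
by rewrite divnDr ?dvdnn // divnn hm mulnDr muln1 PoszD.
Qed.

Lemma row_of_iota r j : (1 <= r)%N -> (0 < j)%N ->
  (row_of n j == r) = (j \in iota (r.-1 * n.-1).+1 n.-1).
Proof.
move=> hr hj; have hm : (0 < n.-1)%N by lia.
rewrite /row_of mem_iota eqn_leq -ltnS leq_divRL // ltn_divLR //.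
have e1 : (r.+1 * n.-1 = r * n.-1 + n.-1)%N by rewrite mulSn addnC.
have e2 : (r.-1 * n.-1 + n.-1 = r * n.-1)%N by rewrite addnC -mulSn prednK.
by rewrite e1; apply/idP/idP => /andP[h1 h2]; apply/andP; split; lia.
Qed.

Lemma sum_size_col_skips u : size u = (n * n.-1)%N ->
  (\sum_(1 <= c < n) size (col_skips n u c))%N = count id u.
Proof.
move=> hs; rewrite -count_skipped hs -(@sum_count_fibers _ _ (col_of n) 1 n).
  by apply: eq_bigr => c _; rewrite size_filter.
by move=> j _; have := col_of_range j; lia.
Qed.

End Grid.

Section Windows.
Variables (n : nat) (u : seq bool).
Hypothesis n_gt1 : (1 < n)%N.
Local Notation win t := (window_at n u t).

Lemma carried_succ t : carried (win t.+1) =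
  if skipped u t.+1 then slot (win t) (col_of n t.+1) else carried (win t).
Proof. by []. Qed.

Lemma slot_succ t k : slot (win t.+1) k =
  if skipped u t.+1 && (k == col_of n t.+1) then carried (win t) else slot (win t) k.
Proof. by rewrite /= /window_step /=; case: (skipped u t.+1). Qed.

Lemma laps_succ t p : laps (win t.+1) p =
  (laps (win t) p + (row_end n t.+1 && (p == carried (win t.+1))))%N.
Proof. by []. Qed.

Lemma window_at_wf t : window_wf n (win t).
Proof.
elim: t => [|t [h1 h2 h3]].
  by split => [|k hk|k1 k2] //=; [lia|split; [lia|apply/eqP; lia]].
have hc := col_of_range n_gt1 t.+1.
rewrite /window_wf carried_succ.
case: (boolP (skipped u t.+1)) => hsk; last first.
  split => [|k hk|k1 k2 hk1 hk2] //; rewrite !slot_succ (negbTE hsk) /=.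
  - exact: h2.
  - exact: h3.
split => [|k hk|k1 k2 hk1 hk2]; rewrite ?slot_succ ?hsk /=.
- by case: (h2 _ hc).
- case: ifP => [_|hkc]; first by case: (h2 _ hc) => _; rewrite eq_sym.
  case: (h2 _ hk) => -> _; split => //; apply/negP => /eqP h.
  by move: hkc; rewrite (h3 _ _ hk hc h) eqxx.
- case: ifP => [/eqP e1|hk1c]; case: ifP => [/eqP e2|hk2c].
  + by rewrite e1 e2.
  + by move=> h; case: (h2 _ hk2) => _; rewrite h eqxx.
  + by move=> h; case: (h2 _ hk1) => _; rewrite -h eqxx.
  + exact: h3.
Qed.

Lemma window_succ_values t : tracks n u t (win t) ->
  uprefix n u t.+1 t.+1%:Z = label_value n (win t) (carried (win t.+1)) + base n t.+1 /\
  forall y : nat, (t.+1 < y <= t + n)%N ->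
    uprefix n u t.+1 y%:Z = label_value n (win t) (slot (win t.+1) (col_of n y)) + base n y.
Proof.
move=> [hX hS]; rewrite carried_succ.
have hcol := col_of_neq n_gt1 (t := t).
have last_pos y : (t.+1 < y <= t + n)%N -> (t + n <= y)%N -> y = (t + n)%N by lia.
have hlast : uprefix n u t (t + n)%N%:Z = uprefix n u t t%:Z + n.
  by have := uprefix_periodic n u t t 1; rewrite mul1r => <-; congr uprefix; lia.
case: (boolP (skipped u t.+1)) => hsk; split.
- by rewrite uprefix_skip // hS //; lia.
- move=> y hy; rewrite uprefix_skip // slot_succ hsk; case: (ltnP y (t + n)) => hyn.
    by rewrite (negbTE (hcol _ _)) ?hS //; lia.
  have -> := last_pos y hy hyn.
  by rewrite col_of_addn // eqxx hlast hX base_addn //; ring.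
- by rewrite uprefix_keep_next // hX.
- move=> y hy; rewrite slot_succ (negbTE hsk); case: (ltnP y (t + n)) => hyn.
    by rewrite uprefix_keep_mid ?hS //; lia.
  have -> := last_pos y hy hyn.
  by rewrite uprefix_keep_last // col_of_addn // base_addn // hS; [ring|lia].
Qed.

Lemma window_at_tracks t : tracks n u t (win t).
Proof.
elim: t => [|t /window_succ_values [hX hS]].
  split => [|y hy]; first by rewrite /base /label_value /= div0n !muln0.
  rewrite /label_value /base /col_of /= !modn_small ?divn_small ?muln0; lia.
split; first by rewrite hX base_succ // /label_value laps_succ eqxx andbT mulnDr PoszD; ring.
move=> y hy; rewrite hS; last by lia.
have [_ /(_ _ (col_of_range n_gt1 y)) [_ /negbTE hne] _] := window_at_wf t.+1.
by rewrite /label_value laps_succ hne andbF addn0.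
Qed.

Lemma carry_count_succ p t :
  carry_count n u p t.+1 = (carry_count n u p t + (carried (win t.+1) == p))%N.
Proof.
rewrite /carry_count -{1}[t.+1]addn1 iotaD count_cat add1n.
by congr (_ + _)%N; rewrite /= addn0.
Qed.

Lemma carry_count_lt p s t j : (s < j <= t)%N -> carried (win j) = p ->
  (carry_count n u p s < carry_count n u p t)%N.
Proof.
move=> hj hc; rewrite /carry_count -(subnKC (_ : s <= t)%N); last by lia.
rewrite iotaD count_cat -ltn_subLR // subnn -has_count; apply/hasP.
by exists j; [rewrite mem_iota; lia|rewrite hc].
Qed.

Lemma laps_mono p s t : (s <= t)%N ->
  (laps (win s) p <= laps (win t) p)%N.
Proof.
move=> /subnK <-; elim: (t - s)%N => [|k IH] //.
by rewrite addSn laps_succ (leq_trans IH) ?leq_addr.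
Qed.

Lemma laps_const p s t : (s <= t)%N ->
  (forall t', (s < t' <= t)%N -> carried (win t') != p) ->
  laps (win t) p = laps (win s) p.
Proof.
move=> /subnK <-; elim: (t - s)%N => [|k IH] // h.
rewrite addSn laps_succ IH => [|t' ht']; last by apply: h; lia.
by rewrite eq_sym (negbTE (h (k + s).+1 _)) ?andbF ?addn0 //; lia.
Qed.

Lemma slot_const c s t : (s <= t)%N ->
  (forall j, (s < j <= t)%N -> ~~ (skipped u j && (col_of n j == c))) ->
  slot (win t) c = slot (win s) c.
Proof.
move=> /subnK <-; elim: (t - s)%N => [|k IH] // h.
rewrite addSn slot_succ IH => [|j hj]; last by apply: h; lia.
by rewrite eq_sym (negbTE (h _ _)) //; lia.
Qed.

Lemma slot_neq_carried c t : (1 <= c <= n.-1)%N ->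
  slot (win t) c != carried (win t).
Proof. by move=> hc; have [_ /(_ c hc) []] := window_at_wf t. Qed.

(* The carried label counts as sitting in the column of the next position; a label
   moves on by one column, completing a lap after the last one, exactly when carried. *)
Lemma laps_carry_count t :
  (n.-1 * laps (win t) (carried (win t)) + t %% n.-1
    = (carried (win t)).-1 + carry_count n u (carried (win t)) t)%N /\
  forall k, (1 <= k <= n.-1)%N ->
    (n.-1 * laps (win t) (slot (win t) k) + k.-1
      = (slot (win t) k).-1 + carry_count n u (slot (win t) k) t)%N.
Proof.
have hm : (0 < n.-1)%N by lia.
elim: t => [|t [IHc IHs]]; first by split => [|k hk]; rewrite /carry_count /= ?mod0n; lia.
have hc := col_of_range n_gt1 t.+1.
have hrow := row_end_modn n_gt1 t.
split.
- rewrite carry_count_succ laps_succ eqxx andbT carried_succ.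
  case hsk: (skipped u t.+1); last by lia.
  by have := IHs _ hc; rewrite /col_of /=; lia.
- move=> k hk; rewrite carry_count_succ laps_succ.
  have /negbTE hne := @slot_neq_carried k t.+1 hk.
  rewrite hne andbF addn0 eq_sym hne addn0.
  rewrite slot_succ in hne *; rewrite carried_succ in hne.
  case: (skipped u t.+1) hne; rewrite ?andTb ?andFb => hne; last exact: IHs.
  have [->|_] := eqVneq k (col_of n t.+1); last exact: IHs.
  by have := IHc; rewrite /col_of /=; lia.
Qed.

Lemma window_final : in_Sn n u ->
  [/\ carried (win (n * n.-1)) = 0%N, laps (win (n * n.-1)) 0 = 1%N &
      forall k, (1 <= k <= n.-1)%N ->
        slot (win (n * n.-1)) k = k /\ laps (win (n * n.-1)) k = 1%N].
Proof.
move=> [_ _ hid]; have hm : (1 <= 1 <= n.-1)%N by lia.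
have nn : (n * n = n * n.-1 + n)%N by rewrite -mulnSr prednK //; lia.
have [hX hS] := window_at_tracks (n * n.-1).
have [hc hslot _] := window_at_wf (n * n.-1).
have [-> ->] : carried (win (n * n.-1)) = 0%N /\
                laps (win (n * n.-1)) (carried (win (n * n.-1))) = 1%N.
  apply: (eq_subz_muln (n := n)) => //; first by lia.
  by move: hX; rewrite hid -[(n * n.-1).+1]addn1 base_last_row // /label_value; lia.
split => // k hk; have [hk_lt _] := hslot k hk.
suff [hsk hl] : slot (win (n * n.-1)) k = k /\
                laps (win (n * n.-1)) (slot (win (n * n.-1)) k) = 1%N.
  by split => //; rewrite -hl hsk.
apply: (eq_subz_muln (n := n)) => //; first by lia.
have := hS (n * n.-1 + k)%N.
by rewrite hid col_of_last_row // base_last_row // /label_value; lia.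
Qed.

Lemma slot_const_col c s t : (s <= t)%N ->
  (forall j, (s < j <= t)%N -> j \notin col_skips n u c) -> (t <= n * n.-1)%N ->
  slot (win t) c = slot (win s) c.
Proof.
move=> hst hj ht; apply: slot_const => // j hjr; apply/negP => hsk.
by have := hj j hjr; rewrite mem_col_skips hsk andbT; lia.
Qed.

Lemma laps_const_slot c p s t : (1 <= c <= n.-1)%N -> (s <= t)%N ->
  (forall t', (s < t' <= t)%N -> slot (win t') c = p) ->
  laps (win t) p = laps (win s) p.
Proof.
move=> hc hst hp; apply: laps_const => // t' ht'.
by rewrite -(hp t' ht') eq_sym slot_neq_carried.
Qed.

Lemma col_skip_step c j : j \in col_skips n u c ->
  slot (win j) c = carried (win j.-1) /\ carried (win j) = slot (win j.-1) c.
Proof.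
rewrite mem_col_skips; case: j => // t /and3P[_ hsk /eqP hcol].
by rewrite slot_succ carried_succ hsk hcol eqxx.
Qed.

Lemma two_le_size_col_skips c : in_Sn n u -> (1 <= c <= n.-1)%N ->
  (2 <= size (col_skips n u c))%N.
Proof.
move=> hS hc; have [_ _ /(_ c hc) [slotN lapsN]] := window_final hS.
case E: (col_skips n u c) => [|j1 [|j2 l]] //; exfalso.
- have slot0 t : (t <= n * n.-1)%N -> slot (win t) c = c.
    by move=> ht; rewrite (@slot_const_col c 0) // => j _; rewrite E.
  suff : laps (win (n * n.-1)) c = 0%N by rewrite lapsN.
  by apply: (@laps_const_slot c c 0) => // t ht; apply: slot0; lia.
- have hj1 : j1 \in col_skips n u c by rewrite E mem_head.
  have nomore j : j != j1 -> j \notin col_skips n u c by rewrite E inE.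
  have [step1 _] := col_skip_step hj1.
  move: (hj1); rewrite mem_col_skips => /and3P[hj1r _ _].
  have before : slot (win j1.-1) c = c.
    rewrite (@slot_const_col c 0) // => [j hj|]; last by lia.
    by apply: nomore; apply/eqP; lia.
  have after : slot (win (n * n.-1)) c = slot (win j1) c.
    by apply: slot_const_col => // [|j hj]; [lia|apply: nomore; apply/eqP; lia].
  have := @slot_neq_carried c j1.-1 hc.
  by rewrite before -step1 -after slotN eqxx.
Qed.

Lemma size_col_skips c : in_Sn n u -> (1 <= c <= n.-1)%N -> size (col_skips n u c) = 2%N.
Proof.
move=> hS hc; apply: (@sum_nat_eq_lb 2 1 n (fun c => size (col_skips n u c))); last by lia.
  by move=> c' hc'; apply: two_le_size_col_skips => //; lia.
by case: hS => hsize hcount _; rewrite sum_size_col_skips // hcount; lia.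
Qed.

Lemma col_skipsE c : in_Sn n u -> (1 <= c <= n.-1)%N ->
  exists j1 j2, [/\ col_skips n u c = [:: j1; j2], (0 < j1 < j2)%N & (j2 <= n * n.-1)%N].
Proof.
move=> hS hc; have := size_col_skips hS hc.
have : sorted ltn (col_skips n u c).
  by apply: sorted_filter; [exact: ltn_trans|exact: iota_ltn_sorted].
case E: (col_skips n u c) => [|j1 [|j2 [|j3 l]]] //= /andP[lt12 _] _.
have hj1 : j1 \in col_skips n u c by rewrite E mem_head.
have hj2 : j2 \in col_skips n u c by rewrite E !inE eqxx orbT.
move: hj1 hj2; rewrite !mem_col_skips => /and3P[h1 _ _] /and3P[h2 _ _].
by exists j1, j2; split => //; lia.
Qed.

Lemma carry_count_final p : in_Sn n u -> (p < n)%N ->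
  carry_count n u p (n * n.-1) = n.-1.
Proof.
move=> hS hp; have [carN lap0 slotN] := window_final hS.
have [hc hs] := laps_carry_count (n * n.-1).
case: (posnP p) => [->|p_gt0].
  by move: hc; rewrite carN lap0 modnMl; lia.
have hk : (1 <= p <= n.-1)%N by lia.
have [sp lp] := slotN p hk.
by move: (hs p hk); rewrite sp lp; lia.
Qed.

Definition carried_value t : int := label_value n (win t) (carried (win t)).
Definition next_value t : int := label_value n (win t) (slot (win t) (col_of n t.+1)).

Section TwoColumnSkips.
Variables (c j1 j2 : nat).
Hypotheses (u_Sn : in_Sn n u) (c_col : (1 <= c <= n.-1)%N).
Hypotheses (skipsE : col_skips n u c = [:: j1; j2]) (j12 : (0 < j1 < j2)%N)
  (j2_le : (j2 <= n * n.-1)%N).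

Lemma col_skip_slots :
  [/\ forall t, (t < j1)%N -> slot (win t) c = c,
      forall t, (j1 <= t < j2)%N -> slot (win t) c = carried (win j1.-1),
      forall t, (j2 <= t <= n * n.-1)%N -> slot (win t) c = c,
      carried (win j2.-1) = c &
      carried (win j2) = carried (win j1.-1)].
Proof.
have [_ _ /(_ c c_col) [slotN _]] := window_final u_Sn.
have hj1 : j1 \in col_skips n u c by rewrite skipsE mem_head.
have hj2 : j2 \in col_skips n u c by rewrite skipsE !inE eqxx orbT.
have [[step1 _] [step2 step2']] := (col_skip_step hj1, col_skip_step hj2).
have other s t : (s <= t <= n * n.-1)%N ->
    (forall j, (s < j <= t)%N -> j != j1 /\ j != j2) -> slot (win t) c = slot (win s) c.
  move=> /andP[hst ht] hj; apply: slot_const_col => // j /hj [/negbTE h1 /negbTE h2].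
  by rewrite skipsE !inE h1 h2.
have before t : (t < j1)%N -> slot (win t) c = c.
  by move=> ht; rewrite (@other 0) // => [|j hj]; [lia|split; apply/eqP; lia].
have middle t : (j1 <= t < j2)%N -> slot (win t) c = carried (win j1.-1).
  by move=> ht; rewrite -step1 (@other j1) // => [|j hj]; [lia|split; apply/eqP; lia].
have after t : (j2 <= t <= n * n.-1)%N -> slot (win t) c = c.
  move=> ht; rewrite -(@other t (n * n.-1)) ?slotN // => [|j hj]; first by lia.
  by split; apply/eqP; lia.
split => //; last by rewrite step2' middle //; lia.
by rewrite -step2 after //; lia.
Qed.

Lemma col_skip_values :
  [/\ next_value j1.-1 = c, carried_value j2.-1 = c%:Z - n%:Z
     & next_value j2.-1 = carried_value j1.-1].
Proof.
have [before middle after car2 _] := col_skip_slots.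
have [_ _ /(_ c c_col) [_ lapsN]] := window_final u_Sn.
have hcol j : j \in [:: j1; j2] -> col_of n j.-1.+1 = c.
  rewrite -skipsE mem_col_skips => /and3P[hj _ /eqP]; by rewrite prednK //; lia.
have col1 := hcol j1 (mem_head _ _).
have col2 : col_of n j2.-1.+1 = c by apply: hcol; rewrite !inE eqxx orbT.
have slot1 : slot (win j1.-1) c = c by apply: before; lia.
have slot2 : slot (win j2.-1) c = carried (win j1.-1) by apply: middle; lia.
have laps1 : laps (win j1.-1) c = 0%N.
  by apply: (@laps_const_slot c c 0) => // t ht; apply: before; lia.
have laps2 : laps (win j2.-1) c = 1%N.
  rewrite -lapsN; apply/esym/(@laps_const_slot c c) => //; first by lia.
  by move=> t ht; apply: after; lia.
have laps3 : laps (win j2.-1) (carried (win j1.-1)) = laps (win j1.-1) (carried (win j1.-1)).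
  apply: (@laps_const_slot c) => //; first by lia.
  by move=> t ht; apply: middle; lia.
rewrite /next_value /carried_value col1 col2 car2 slot1 slot2 /label_value.
by rewrite laps1 laps2 laps3 muln0 muln1 subr0.
Qed.

Lemma first_col_skip_bounds : c%:Z - n%:Z < carried_value j1.-1 < c%:Z.
Proof.
have [_ _ _ _ car2] := col_skip_slots.
have [carN_lt _ _] := window_at_wf j1.-1.
set p := carried (win j1.-1) in car2 carN_lt *.
have [inv _] := laps_carry_count j1.-1.
have hj1 : j1 \in col_skips n u c by rewrite skipsE mem_head.
move: hj1; rewrite mem_col_skips => /and3P[_ _ /eqP col1].
have ccN := carry_count_final u_Sn carN_lt.
have cc_lt : (carry_count n u p j1.-1 < n.-1)%N.
  by rewrite -ccN; apply: (@carry_count_lt _ _ _ j2) => //; lia.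
have cc_pos : (0 < p)%N -> (0 < carry_count n u p j1.-1)%N.
  move=> p_gt0; have t1_gt0 : (0 < j1.-1)%N by move: p_gt0; rewrite /p; case: (j1.-1).
  by apply: (@carry_count_lt p 0 j1.-1 j1.-1); rewrite ?t1_gt0 ?leqnn.
apply: sub_muln_bounds cc_lt cc_pos _ => //; first by lia.
by move: inv; rewrite -/p; move: col1; rewrite /col_of; lia.
Qed.

End TwoColumnSkips.

Definition crossing t : bool := (carried_value t <= 0) && (0 < next_value t).

Lemma refl_of_skip t :
  refl_of n u t.+1 =1 atrans n (carried_value t + base n t.+1) (next_value t + base n t.+1).
Proof.
have [hX hS] := window_at_tracks t.
by move=> k; rewrite (refl_ofE _ n_gt1) hX (hS t.+1) //; lia.
Qed.

Lemma skip_value_bounds t : in_Sn n u -> (t < n * n.-1)%N -> skipped u t.+1 ->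
  [/\ carried_value t < next_value t, next_value t < carried_value t + n,
      - n%:Z < carried_value t & next_value t < n].
Proof.
move=> hS ht hsk; have hc := col_of_range n_gt1 t.+1.
have [j1 [j2 [E j12 j2N]]] := col_skipsE hS hc.
have [v1 v2 v3] := col_skip_values hS hc E j12 j2N.
have /andP[x_gt x_lt] := first_col_skip_bounds hS hc E j12 j2N.
have : t.+1 \in [:: j1; j2] by rewrite -E mem_col_skips hsk eqxx andbT; lia.
rewrite !inE => /orP[] /eqP e.
- have -> : t = j1.-1 by rewrite -e.
  by rewrite v1; split; lia.
- have -> : t = j2.-1 by rewrite -e.
  by rewrite v2 v3; split; lia.
Qed.

Lemma is_skipE j : is_skip n u j = (0 < j <= n * n.-1)%N && skipped u j.
Proof. by rewrite /is_skip andbA. Qed.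

Lemma negative_skipE j : in_Sn n u ->
  negative_skip n u j <-> [&& (0 < j <= n * n.-1)%N, skipped u j & crossing j.-1].
Proof.
move=> hS; rewrite /negative_skip is_skipE andbA.
case hjs : (_ && _); last by split => // -[].
case: j hjs => // t /andP[/andP[_ ht] hsk] /=.
have [XR RXn Xgt Rlt] := skip_value_bounds hS ht hsk.
set X := carried_value t in XR RXn Xgt *; set R := next_value t in XR RXn Rlt *.
have hbase : base n t.+1 = (t %/ n.-1)%N%:Z * n by rewrite /base PoszM mulrC.
have mX (q : int) : modrep n (X + q * n) = if 0 < X then X else X + n.
  by rewrite modrep_small //; lia.
have mR (q : int) : modrep n (R + q * n) = if 0 < R then R else R + n.
  by rewrite modrep_small //; lia.
rewrite /crossing -/X -/R; split.
- case=> _ [a [b [ab [hr [_ [hlt _]]]]]].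
  have e : atrans n (X + base n t.+1) (R + base n t.+1) a = b.
    have := atrans_fst n a b 0; rewrite mul0r !addr0 => hab.
    by rewrite -refl_of_skip hr hab.
  have XRb : X + base n t.+1 < R + base n t.+1 by lia.
  have [q [ea eb]] := atrans_pair XRb ab e.
  move: hlt; have -> : a = X + ((t %/ n.-1)%N%:Z + q) * n by rewrite ea hbase; ring.
  have -> : b = R + ((t %/ n.-1)%N%:Z + q) * n by rewrite eb hbase; ring.
  rewrite mX mR.
  by case: (ltrP 0 X) => hX; case: (ltrP 0 R) => hR /=; lia.
- move=> hcross; split => //; exists (X + base n t.+1), (R + base n t.+1).
  split; first by lia.
  split; first exact: refl_of_skip.
  rewrite hbase mX mR; move: hcross.
  by case: (ltrP 0 X) => hX; case: (ltrP 0 R) => hR /=; lia.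
Qed.

Lemma col_crossing c j1 j2 : in_Sn n u -> (1 <= c <= n.-1)%N ->
  col_skips n u c = [:: j1; j2] -> (0 < j1 < j2)%N -> (j2 <= n * n.-1)%N ->
  crossing j2.-1 = ~~ crossing j1.-1.
Proof.
move=> hS hc E j12 j2N; have [v1 v2 v3] := col_skip_values hS hc E j12 j2N.
have c_pos : 0 < c%:Z by lia.
have cn : c%:Z - n%:Z <= 0 by lia.
by rewrite /crossing v1 v2 v3 c_pos cn andbT ltNge.
Qed.

Lemma col_negative_skip c : in_Sn n u -> (1 <= c <= n.-1)%N ->
  exists! j, [/\ (1 <= j <= n * n.-1)%N, col_of n j = c & negative_skip n u j].
Proof.
move=> hS hc; have [j1 [j2 [E j12 j2N]]] := col_skipsE hS hc.
have hcross := col_crossing hS hc E j12 j2N.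
have negP j : [/\ (1 <= j <= n * n.-1)%N, col_of n j = c & negative_skip n u j]
    <-> (j \in [:: j1; j2]) && crossing j.-1.
  rewrite -E mem_col_skips; split.
  - by case=> hj hcol /(negative_skipE _ hS) /and3P[_ hsk hcr]; rewrite hj hsk hcol eqxx hcr.
  - case/andP => /and3P[hj hsk /eqP hcol] hcr; split => //.
    by apply/(negative_skipE _ hS); rewrite hj hsk hcr.
exists (if crossing j1.-1 then j1 else j2); split.
  by apply/negP; case: ifP => h; rewrite !inE eqxx ?orbT /= ?hcross ?h.
move=> j /negP; rewrite !inE => /andP[/orP[] /eqP -> hcr]; first by rewrite hcr.
by move: hcr; rewrite hcross => /negbTE ->.
Qed.

Definition after_value t : int := if skipped u t.+1 then next_value t else carried_value t.

Lemma carried_value_succ t :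
  carried_value t.+1 = after_value t - (n * row_end n t.+1)%N%:Z.
Proof.
rewrite /carried_value /after_value /next_value /label_value laps_succ eqxx andbT carried_succ.
by case: (skipped u t.+1) => /=; rewrite /carried_value /label_value; lia.
Qed.

Lemma laps_le1 p t : in_Sn n u -> (p < n)%N -> (t <= n * n.-1)%N ->
  (laps (win t) p <= 1)%N.
Proof.
move=> hS hp ht; have [_ lap0 slotN] := window_final hS.
apply: (leq_trans (laps_mono p ht)); case: (posnP p) => [->|p_gt0]; first by rewrite lap0.
have hp' : (1 <= p <= n.-1)%N by lia.
by have [_ ->] := slotN p hp'.
Qed.

Lemma carried_value_row_start t : (n.-1 %| t)%N -> carried_value t <= 0.
Proof.
case: t => [|t] hdvd; first by rewrite /carried_value /label_value /= muln0.
have [hc _ _] := window_at_wf t.+1.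
have l1 : (1 <= laps (win t.+1) (carried (win t.+1)))%N.
  by rewrite laps_succ /row_end hdvd eqxx andbT addn1.
by rewrite /carried_value /label_value; nia.
Qed.

Lemma after_value_row_end t : in_Sn n u -> (n.-1 %| t.+1)%N -> (t.+1 < n * n.-1)%N ->
  0 < after_value t.
Proof.
move=> hS hdvd ht; have [carN lap0 _] := window_final hS.
have := carried_value_succ t; rewrite /row_end hdvd muln1 => e.
have [hq _ _] := window_at_wf t.+1.
set q := carried (win t.+1) in e hq.
have lapq : laps (win t.+1) q = 1%N.
  apply/eqP; rewrite eqn_leq laps_le1 //; last by lia.
  by rewrite laps_succ /row_end hdvd eqxx andbT addn1.
have q_pos : (0 < q)%N.
  rewrite lt0n; apply/eqP => q0.
  have hN : (n * n.-1 = (n * n.-1).-1.+1)%N by rewrite prednK //; lia.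
  have := laps_succ (n * n.-1).-1 0; rewrite -hN carN eqxx /row_end dvdn_mull //= lap0.
  have ht' : (t.+1 <= (n * n.-1).-1)%N by lia.
  by have := laps_mono 0 ht'; rewrite -q0 lapq; lia.
by move: e; rewrite /carried_value /label_value -/q lapq muln1; lia.
Qed.

Lemma row_crossing_count r : in_Sn n u -> (1 <= r <= n.-1)%N ->
  count (fun j => skipped u j && crossing j.-1) (iota (r.-1 * n.-1).+1 n.-1) = 1%N.
Proof.
move=> hS hr; have hm : (0 < n.-1)%N by lia.
have hrN : (r * n.-1 < n * n.-1)%N by rewrite ltn_mul2r hm; lia.
have row_shift : (r.-1 * n.-1 + n.-1 = r * n.-1)%N by rewrite addnC -mulSn prednK //; lia.
set s := (r.-1 * n.-1).+1.
have hBA k : (k <= n.-2)%N -> carried_value (s + k).-1 <= after_value (s + k).-1.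
  move=> hk; rewrite addSn /= /after_value; case: ifP => [hsk|_] //.
  have hlt : (r.-1 * n.-1 + k < n * n.-1)%N by lia.
  by have [] := skip_value_bounds hS hlt hsk; lia.
have hstep k : (k < n.-2)%N -> carried_value (s + k).+1.-1 = after_value (s + k).-1.
  move=> hk; rewrite addSn /= carried_value_succ /row_end.
  have -> : (n.-1 %| (r.-1 * n.-1 + k).+1)%N = false.
    by rewrite /dvdn -addnS modnMDl modn_small //; lia.
  by rewrite muln0 subr0.
have start : carried_value s.-1 <= 0.
  by apply: carried_value_row_start; rewrite /dvdn modnMl.
have fin : 0 < after_value (s + n.-2).-1.
  have e : ((s + n.-2).-1.+1 = r * n.-1)%N by rewrite /s; lia.
  by apply: after_value_row_end; rewrite // e // /dvdn modnMl.
have := @count_zero_crossings (fun j => carried_value j.-1) (fun j => after_value j.-1)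
  s n.-2 hBA hstep.
rewrite prednK // start fin /= => <-.
apply: eq_in_count => j; rewrite mem_iota => hj /=.
have j_pos : (0 < j)%N := leq_trans (ltn0Sn _) (andP hj).1.
rewrite /after_value (prednK j_pos).
by rewrite /crossing; case: (skipped u j) => //; case: (ltrP 0 (carried_value j.-1)).
Qed.

Lemma row_negative_skip r : in_Sn n u -> (1 <= r <= n.-1)%N ->
  exists! j, [/\ (1 <= j <= n * n.-1)%N, row_of n j = r & negative_skip n u j].
Proof.
move=> hS hr; have [j [hj hsk uniq]] := count_eq1_ex_unique (row_crossing_count hS hr).
have hrN : (r * n.-1 <= n * n.-1)%N by rewrite leq_mul2r; lia.
have row_shift : (r.-1 * n.-1 + n.-1 = r * n.-1)%N by rewrite addnC -mulSn prednK //; lia.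
have in_row (k : nat) : k \in iota (r.-1 * n.-1).+1 n.-1 -> (0 < k <= n * n.-1)%N.
  by rewrite mem_iota; move: (r.-1 * n.-1)%N (n * n.-1)%N row_shift hrN => a N; lia.
have r_pos := (andP hr).1.
have [j_pos jN] := andP (in_row j hj).
exists j; split.
  split; [exact: in_row|by apply/eqP; rewrite row_of_iota|].
  by apply/(negative_skipE _ hS); rewrite j_pos jN.
move=> k [/andP[k_pos kN] /eqP hrow /(negative_skipE _ hS) /and3P[_ hskk hcr]].
by apply/esym/uniq; [rewrite -row_of_iota|rewrite hskk].
Qed.

End Windows.

Theorem proposition8p3 (n : nat) (u : seq bool) :
  (2 <= n)%N -> in_Sn n u ->
  (forall c : nat, (1 <= c <= n.-1)%N ->
     exists! j : nat, [/\ (1 <= j <= n * n.-1)%N, col_of n j = c & negative_skip n u j]) /\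
  (forall r : nat, (1 <= r <= n.-1)%N ->
     exists! j : nat, [/\ (1 <= j <= n * n.-1)%N, row_of n j = r & negative_skip n u j]).
Proof.
move=> n_gt1 u_Sn; split => [c hc|r hr].
- exact: col_negative_skip.
- exact: row_negative_skip.
Qed.
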